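(* Let $\Gamma_1,\dots,\Gamma_d$ be directed graphs on a common finite vertex set $\mathcal A$ that do not satisfy condition $(\star)$. Then for every group $G$ generated by $d$ elements $g_1,\dots,g_d$, the corresponding $G$-nearest-neighbor subshift of finite type $X=\{x\in\mathcal A^G : \forall h\in G,\ \forall 1\le i\le d,\ x_h\to x_{hg_i}\text{ is an edge of }\Gamma_i\}$ is empty.
   Context: Condition $(\star)$ for a family of directed graphs $\Gamma_1,\dots,\Gamma_d$ on vertex set $\mathcal A$: there exist a nonempty subset $\mathcal A'\subseteq\mathcal A$ and a function $\Psi:\mathcal A'\times\{g_1,\dots,g_d\}\to\mathcal A'$ such that for every $a\in\mathcal A'$ and every $1\le i\le d$, $a\to\Psi(a,g_i)$ is an edge of $\Gamma_i$. *)

From mathcomp Require Import all_boot.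
Set Implicit Arguments. Unset Strict Implicit. Unset Printing Implicit Defensive.

(* A family of d directed graphs on a common finite vertex set A is given as
   Gamma : 'I_d -> rel A, where (Gamma i a b) means a -> b is an edge of Gamma_i. *)

Definition cond_star (A : finType) (d : nat) (Gamma : 'I_d -> rel A) : Prop :=
  exists A' : {set A}, A' != set0 /\
    exists Psi : {a : A | a \in A'} -> 'I_d -> {a : A | a \in A'},
      forall (a : {a : A | a \in A'}) (i : 'I_d),
        Gamma i (sval a) (sval (Psi a i)).

Definition is_group (G : Type) (mul : G -> G -> G) (one : G) (inv : G -> G) : Prop :=
  (forall x y z, mul x (mul y z) = mul (mul x y) z) /\
  (forall x, mul one x = x) /\ (forall x, mul x one = x) /\
  (forall x, mul (inv x) x = one) /\ (forall x, mul x (inv x) = one).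

Definition generated_by (G : Type) (mul : G -> G -> G) (one : G) (inv : G -> G)
  (d : nat) (g : 'I_d -> G) : Prop :=
  forall S : G -> Prop,
    (forall i, S (g i)) -> S one ->
    (forall x y, S x -> S y -> S (mul x y)) ->
    (forall x, S x -> S (inv x)) ->
    forall h, S h.

Definition nn_sft (A : finType) (d : nat) (Gamma : 'I_d -> rel A)
  (G : Type) (mul : G -> G -> G) (g : 'I_d -> G) (x : G -> A) : Prop :=
  forall (h : G) (i : 'I_d), Gamma i (x h) (x (mul h (g i))).

(* If x lies in X, take for A' the set of symbols occurring in x; for a = x_h
   put Psi(a, g_i) := x_(h g_i), which is again in A' and is joined to a by an
   edge of Gamma_i. *)

From mathcomp Require Import all_boot.
From Stdlib Require Import ClassicalEpsilon.

Set Implicit Arguments.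
Unset Strict Implicit.

Section SymbolsOfConfiguration.

Variables (A : finType) (G : Type) (x : G -> A).

Definition symbols_of : {set A} :=
  [set a | is_left (excluded_middle_informative (exists h, x h = a))].

Lemma symbols_ofP (a : A) : reflect (exists h, x h = a) (a \in symbols_of).
Proof. by rewrite inE; case: excluded_middle_informative => H; constructor. Qed.

Lemma symbol_in_symbols_of (h : G) : x h \in symbols_of.
Proof. by apply/symbols_ofP; exists h. Qed.

Definition occurrence (a : {a : A | a \in symbols_of}) : {h : G | x h = sval a} :=
  constructive_indefinite_description _ (elimT (symbols_ofP _) (svalP a)).

End SymbolsOfConfiguration.

Lemma nn_sft_cond_star (A : finType) (d : nat) (Gamma : 'I_d -> rel A)
    (G : Type) (mul : G -> G -> G) (g : 'I_d -> G) (x : G -> A) (h0 : G) :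
  nn_sft Gamma mul g x -> cond_star Gamma.
Proof.
move=> Hx; exists (symbols_of x); split.
  by apply/set0Pn; exists (x h0); apply: symbol_in_symbols_of.
exists (fun a i => exist _ (x (mul (sval (occurrence a)) (g i)))
                          (symbol_in_symbols_of _ _)).
by move=> a i /=; case: (occurrence a) => h /= <-; apply: Hx.
Qed.

(* [HG] and [Hgen] are deliberately unused: only an element of G is needed. *)
Theorem mainTheorem2 (A : finType) (d : nat) (Gamma : 'I_d -> rel A)
  (Hnstar : ~ cond_star Gamma)
  (G : Type) (mul : G -> G -> G) (one : G) (inv : G -> G)
  (HG : is_group mul one inv) (g : 'I_d -> G) (Hgen : generated_by mul one inv g) :
  forall x : G -> A, ~ nn_sft Gamma mul g x.
Proof. by move=> x Hx; apply: Hnstar; apply: (nn_sft_cond_star one Hx). Qed.
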